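(* Let $d\in\mathbb{N}$ and $A\subseteq\mathbb{N}_0^d$, and let $\mathcal{A}$ be the game with move set $A$. Then $\mathcal{A}$ is reflexive if and only if $$A+A=A^c\setminus T_{\mathcal{A}},$$ where $A+A=\{\boldsymbol a+\boldsymbol b:\boldsymbol a,\boldsymbol b\in A\}$ and $A^c=\mathbb{N}_0^d\setminus A$.
   Context: For $d\in\mathbb{N}$ a game is a set $\mathcal{M}\subseteq\mathbb{N}_0^d$ of moves. From position $\boldsymbol x$ a player may move to $\boldsymbol y\in\mathbb{N}_0^d$ iff $\boldsymbol x-\boldsymbol y\in\mathcal{M}$. Misère play: a player who cannot move wins. If $\boldsymbol 0\in\mathcal{M}$, $P(\mathcal{M})=\varnothing$. Otherwise: a position is an N-position if it has no option or some option is a P-position; otherwise it is a P-position; $P(\mathcal{M})$ denotes the set of P-positions. The $\star$-operator is $\mathcal{M}^\star=P(\mathcal{M})$, and $\mathcal{M}$ is reflexive if $\mathcal{M}=\mathcal{M}^\star$. The set of terminal positions of $\mathcal{M}$ is $T_{\mathcal{M}}=\{\boldsymbol x\in\mathbb{N}_0^d:\ \boldsymbol x\not\succeq\boldsymbol m\text{ for all }\boldsymbol m\in\mathcal{M}\}$, where $\preceq$ is the componentwise partial order (so $T_{\mathcal{M}}=\mathbb{N}_0^d$ if $\mathcal{M}=\varnothing$). *)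

From mathcomp Require Import all_boot.
Set Implicit Arguments. Unset Strict Implicit. Unset Printing Implicit Defensive.

Definition pos (d : nat) := 'I_d -> nat.

Definition ple d (m x : pos d) : Prop := forall i, m i <= x i.
Definition padd d (x y : pos d) : pos d := fun i => x i + y i.
Definition psub d (x y : pos d) : pos d := fun i => x i - y i.
Definition pzero d : pos d := fun _ => 0.
Definition psum d (x : pos d) : nat := \sum_(i < d) x i.

(* A game is a set of moves M ⊆ N_0^d. From x one may move to y iff x - y ∈ M,
   i.e. to x - m for m ∈ M with m ⪯ x. *)

(* Fuel-based unfolding of the recursive P/N classification (misère play):
   x is a P-position iff it has an option and every option is an N-position
   (i.e. not a P-position). When 0 ∉ M each move strictly decreases psum,
   so fuel (psum x).+1 suffices. *)
Fixpoint isP_fuel d (M : pos d -> Prop) (n : nat) (x : pos d) : Prop :=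
  match n with
  | 0 => False
  | n'.+1 =>
      (exists m, M m /\ ple m x) /\
      (forall m, M m -> ple m x -> ~ isP_fuel M n' (psub x m))
  end.

(* P(M): empty if 0 ∈ M, otherwise the set of P-positions. *)
Definition Ppos d (M : pos d -> Prop) (x : pos d) : Prop :=
  ~ M (@pzero d) /\ isP_fuel M (psum x).+1 x.

Definition reflexive_game d (M : pos d -> Prop) : Prop :=
  forall x, M x <-> Ppos M x.

Definition terminal d (M : pos d -> Prop) (x : pos d) : Prop :=
  forall m, M m -> ~ ple m x.

Definition sumset d (A : pos d -> Prop) (x : pos d) : Prop :=
  exists a b, A a /\ A b /\ x = padd a b.

From mathcomp Require Import all_boot.
From Stdlib Require Import Classical FunctionalExtensionality.
Set Implicit Arguments. Unset Strict Implicit.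

(* When 0 is not a move, every move lowers the coordinate sum, so the P-positions
   are the unique set B solving the recursion "x in B iff x has an option and no
   option of x lies in B" (by induction on the coordinate sum).  Hence A is
   reflexive iff 0 is not in A and A itself solves this recursion.  Since the
   options of x landing in A are exactly the decompositions x = a + b with a, b
   in A, the recursion for A says: x in A iff x is not terminal and x is not in
   A + A; and 0 not in A is forced by 0 = 0 + 0. *)

Lemma padd_psubK d (x m : pos d) : ple m x -> padd m (psub x m) = x.
Proof. by move=> le; apply: functional_extensionality => i; exact: subnKC. Qed.

Lemma psub_paddK d (a b : pos d) : psub (padd a b) a = b.
Proof. by apply: functional_extensionality => i; exact: addKn. Qed.

Lemma ple_padd d (a b : pos d) : ple a (padd a b).
Proof. by move=> i; exact: leq_addr. Qed.

Lemma psum_psub d (x m : pos d) : ple m x -> psum (psub x m) + psum m = psum x.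
Proof.
move=> le; rewrite /psum -big_split /=; apply: eq_bigr => i _.
exact: subnK.
Qed.

Lemma psum_gt0 d (m : pos d) : m <> @pzero d -> 0 < psum m.
Proof.
move=> m_neq0; rewrite lt0n; apply/negP; rewrite sum_nat_eq0 => /forallP m0.
by apply: m_neq0; apply: functional_extensionality => i; exact/eqP/m0.
Qed.

Section Recursion.

Variables (d : nat) (A : pos d -> Prop).
Hypothesis A0 : ~ A (@pzero d).

Definition solves_P_recursion (B : pos d -> Prop) : Prop :=
  forall x, B x <-> (exists m, A m /\ ple m x) /\
                    (forall m, A m -> ple m x -> ~ B (psub x m)).

Lemma psum_move_lt (x m : pos d) : A m -> ple m x -> psum (psub x m) < psum x.
Proof.
move=> Am le; rewrite -(psum_psub le) -[X in X < _]addn0 ltn_add2l.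
by apply: psum_gt0 => m0; rewrite m0 in Am.
Qed.

Lemma isP_fuel_stable n1 n2 x :
  psum x < n1 -> psum x < n2 -> isP_fuel A n1 x <-> isP_fuel A n2 x.
Proof.
elim: n1 n2 x => [|n1 IH] [|n2] x //= lt1 lt2.
have IHm m : A m -> ple m x -> isP_fuel A n1 (psub x m) <-> isP_fuel A n2 (psub x m).
  move=> Am le; have lt := psum_move_lt Am le.
  by apply: IH; [exact: leq_trans lt lt1 | exact: leq_trans lt lt2].
split=> -[has_opt noP]; split=> // m Am le.
- by rewrite -IHm //; exact: noP.
- by rewrite IHm //; exact: noP.
Qed.

Lemma Ppos_solves_P_recursion : solves_P_recursion (Ppos A).
Proof.
move=> x; rewrite {1}/Ppos /=.
have fuelE m : A m -> ple m x ->
    isP_fuel A (psum x) (psub x m) <-> isP_fuel A (psum (psub x m)).+1 (psub x m).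
  by move=> Am le; apply: isP_fuel_stable => //; exact: psum_move_lt.
split.
- move=> [_ [has_opt noP]]; split=> // m Am le [_].
  by rewrite -fuelE //; exact: noP.
- move=> [has_opt noP]; do 2!split=> //; move=> m Am le.
  by rewrite fuelE // => hP; exact: noP m Am le (conj A0 hP).
Qed.

Lemma P_recursion_unique (B C : pos d -> Prop) :
  solves_P_recursion B -> solves_P_recursion C -> forall x, B x <-> C x.
Proof.
move=> recB recC x; move: {2}(psum x).+1 (ltnSn (psum x)) => n.
elim: n x => [|n IH] x // lt_xn.
have IHm m : A m -> ple m x -> B (psub x m) <-> C (psub x m).
  by move=> Am le; apply: IH; exact: leq_trans (psum_move_lt Am le) lt_xn.
rewrite recB recC; split=> -[has_opt noP]; split=> // m Am le.
- by rewrite -IHm //; exact: noP.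
- by rewrite IHm //; exact: noP.
Qed.

End Recursion.

Lemma reflexive_gameE d (A : pos d -> Prop) :
  reflexive_game A <-> ~ A (@pzero d) /\ solves_P_recursion A A.
Proof.
split.
- move=> reflA; have A0 : ~ A (@pzero d) by move=> A0; case/reflA: (A0).
  split=> // x; rewrite (reflA x) Ppos_solves_P_recursion //.
  split=> -[has_opt noP]; split=> // m Am le.
  + by rewrite reflA; exact: noP.
  + by rewrite -reflA; exact: noP.
- move=> [A0 recA] x.
  exact: P_recursion_unique recA (Ppos_solves_P_recursion A0) x.
Qed.

Lemma sumsetP d (A : pos d -> Prop) x :
  sumset A x <-> exists m, A m /\ ple m x /\ A (psub x m).
Proof.
split.
- move=> [a [b [Aa [Ab ->]]]]; exists a; rewrite psub_paddK.
  by split=> //; split=> //; exact: ple_padd.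
- move=> [m [Am [le Axm]]]; exists m, (psub x m).
  by split=> //; split=> //; rewrite padd_psubK.
Qed.

Lemma not_terminalP d (A : pos d -> Prop) x :
  ~ terminal A x <-> exists m, A m /\ ple m x.
Proof.
split; last by move=> [m [Am le]] term; exact: term m Am le.
move=> nterm; apply: NNPP => no_move; apply: nterm => m Am le.
by apply: no_move; exists m.
Qed.

Lemma solves_P_recursion_self d (A : pos d -> Prop) :
  solves_P_recursion A A <-> forall x, A x <-> ~ terminal A x /\ ~ sumset A x.
Proof.
have noP_sumset x :
    (forall m, A m -> ple m x -> ~ A (psub x m)) <-> ~ sumset A x.
  rewrite sumsetP; split.
  - by move=> noP [m [Am [le Axm]]]; exact: noP m Am le Axm.
  - by move=> nsum m Am le Axm; apply: nsum; exists m.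
by split=> recA x; rewrite recA not_terminalP noP_sumset.
Qed.

Theorem theorem4 (d : nat) (hd : 0 < d) (A : pos d -> Prop) :
  reflexive_game A <->
  (forall x : pos d, sumset A x <-> (~ A x /\ ~ terminal A x)).
Proof.
rewrite reflexive_gameE solves_P_recursion_self.
have sumset_not_terminal x : sumset A x -> ~ terminal A x.
  by move=> [a [b [Aa [Ab ->]]]] term; exact: term a Aa (ple_padd a b).
split.
- move=> [A0 recA] x; split.
  + by move=> sx; split; [move=> /recA [] | exact: sumset_not_terminal].
  + move=> [nAx nterm]; apply: NNPP => nsx; exact/nAx/recA.
- move=> sumsetE.
  have A0 : ~ A (@pzero d).
    move=> A0; have sum00 : sumset A (@pzero d).
      by exists (@pzero d), (@pzero d); rewrite /padd.
    by have [] := proj1 (sumsetE _) sum00.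
  split=> // x; split.
  + move=> Ax; split; last by move=> /sumsetE [].
    by apply/not_terminalP; exists x; split=> // i.
  + move=> [nterm nsx]; apply: NNPP => nAx; exact/nsx/sumsetE.
Qed.
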